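(* Under the standing setup with $\mathrm{Var}(X_N)>0$, if contextual reinforcement holds ($\delta_W\cdot\delta_B\ge0$), then $D\ge 0$ if and only if $D_{ER}\ge D_{NM}$.
   Context: Let $(X,Y,N)$ be a random triple with $X\in\{0,1\}$, $Y$ real-valued, $N$ taking values in a finite set $\mathcal N$. Write $X_n=\mathbb E[X\mid N=n]$, $X_N=\mathbb E[X\mid N]$, $Y_N=\mathbb E[Y\mid N]$. Assume some $n$ has $\Pr(N=n)>0$ and $X_n\in(0,1)$, and $\mathbb E[Y\mid X=x,N=n]\in[\underline Y,\overline Y]$ whenever $\Pr(X=x,N=n)>0$. $D=\mathbb E[Y\mid X=1]-\mathbb E[Y\mid X=0]$; $\delta_B=\mathbb E[\mathrm{Cov}(Y,X\mid N)]$; $\delta_W=\mathbb E[\mathrm{Cov}(Y,X_N\mid X)]$; $D_{ER}=\mathrm{Cov}(Y_N,X_N)/\mathrm{Var}(X_N)$; $D_{NM}=\mathbb E[X_NY_N]/\mathbb E[X_N]-\mathbb E[(1-X_N)Y_N]/\mathbb E[1-X_N]$. *)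

From HB Require Import structures.
From mathcomp Require Import all_boot all_order all_algebra.
From mathcomp Require Import all_classical all_reals.
From mathcomp Require Import ereal measure lebesgue_measure lebesgue_integral probability.
Set Implicit Arguments. Unset Strict Implicit. Unset Printing Implicit Defensive.
Import Order.TTheory GRing.Theory Num.Theory.
Local Open Scope classical_set_scope.
Local Open Scope ring_scope.

Section Defs.
Context {d : measure_display} {T : measurableType d} {R : realType}
        (P : probability T R).

Definition pr (A : set T) : R := fine (P A).

Definition Ex (f : T -> R) : R := fine (\int[P]_w (f w)%:E)%E.

Definition cE (f : T -> R) (A : set T) : R :=
  fine (\int[P]_(w in A) (f w)%:E)%E / pr A.

Definition cCov (f g : T -> R) (A : set T) : R :=
  cE (fun w => f w * g w) A - cE f A * cE g A.

Definition Cov (f g : T -> R) : R :=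
  Ex (fun w => f w * g w) - Ex f * Ex g.

Definition Var (f : T -> R) : R := Cov f f.

Variables (nT : finType) (X : T -> bool) (Y : T -> R) (N : T -> nT).

Definition Xr (w : T) : R := (X w)%:R.

Definition Xn (n : nT) : R := cE Xr [set w | N w = n].
Definition Yn (n : nT) : R := cE Y [set w | N w = n].
Definition XN (w : T) : R := Xn (N w).
Definition YN (w : T) : R := Yn (N w).

Definition Dgap : R := cE Y [set w | X w] - cE Y [set w | ~~ X w].

Definition deltaB : R := Ex (fun w => cCov Y Xr [set v | N v = N w]).

Definition deltaW : R := Ex (fun w => cCov Y XN [set v | X v = X w]).

Definition D_ER : R := Cov YN XN / Var XN.

Definition D_NM : R :=
  Ex (fun w => XN w * YN w) / Ex XN
  - Ex (fun w => (1 - XN w) * YN w) / Ex (fun w => 1 - XN w).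

End Defs.

From HB Require Import structures.
From mathcomp Require Import all_boot all_order all_algebra.
From mathcomp Require Import all_classical all_reals.
From mathcomp Require Import ereal measure lebesgue_measure lebesgue_integral probability.
From mathcomp Require Import measurable_realfun numfun.
From mathcomp Require Import ring lra.
Import Order.TTheory GRing.Theory Num.Theory.
Local Open Scope classical_set_scope.
Local Open Scope ring_scope.

(* Every quantity in the statement is a rational function of the masses
   P(X = x, N = n) and the partial integrals E[Y; X = x, N = n] of the cells
   of the partition generated by (X, N).  Writing p = E[X_N], V = Var(X_N) and
   C = Cov(Y_N, X_N), these formulas give
     delta_B = p(1-p) D - C,  delta_W = C - D V,
     D_NM = C / (p(1-p)),     D_ER = C / V,
   and V < p(1-p) because some X_n lies strictly between 0 and 1.  Hence
   delta_B + delta_W = (p(1-p) - V) D, so under reinforcement D and C have the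
   same sign, while D_NM <= D_ER holds exactly when C >= 0. *)

Lemma ler_div_lt_denom (R : realFieldType) (q V C : R) :
  0 < V -> V < q -> (C / q <= C / V) = (0 <= C).
Proof.
move=> V0 Vq; rewrite -subr_ge0.
have -> : C / V - C / q = C * ((q - V) / (q * V)).
  by field; rewrite !gt_eqF //; lra.
by rewrite pmulr_lge0 // divr_gt0 ?mulr_gt0 ?subr_gt0 //; lra.
Qed.

Lemma ge0_iff_ge0_of_same_sign (R : realFieldType) (q V D C : R) :
  0 < V -> V < q -> 0 <= (q * D - C) * (C - D * V) -> (0 <= D <-> 0 <= C).
Proof.
move=> V0 Vq h; split=> hD; rewrite leNgt; apply/negP => hC.
- have h1 : 0 < q * D - C by nra.
  have h2 : C - D * V < 0 by nra.
  nra.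
- have h1 : q * D - C < 0 by nra.
  have h2 : 0 < C - D * V by nra.
  nra.
Qed.

Lemma sum_pair_bool (V : zmodType) (I : finType) (F : bool * I -> V) :
  \sum_i F i = \sum_n (F (true, n) + F (false, n)).
Proof.
rewrite (eq_bigr (fun i => F (i.1, i.2))) => [|[] //].
by rewrite -(pair_bigA _ (fun x n => F (x, n))) big_bool big_split.
Qed.

Lemma sum_if_eq (V : zmodType) (I : finType) (F : I -> V) i0 :
  \sum_i (if i == i0 then F i else 0) = F i0.
Proof. by rewrite -big_mkcond big_pred1_eq. Qed.

Section Cells.
Context {d : measure_display} {T : measurableType d} {nT : finType}
        (X : T -> bool) (N : T -> nT).
Hypothesis mX : measurable [set w | X w].
Hypothesis mN : forall n : nT, measurable [set w | N w = n].

Definition cell (x : bool) (n : nT) : set T := [set w | X w = x /\ N w = n].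

Lemma measurable_cell x n : measurable (cell x n).
Proof.
rewrite (_ : cell x n = [set w | X w = x] `&` [set w | N w = n]) //.
apply: measurableI => //; case: x.
  by rewrite (_ : [set w | X w = true] = [set w | X w]).
rewrite (_ : [set w | X w = false] = ~` [set w | X w]); first exact: measurableC.
by apply/seteqP; split => w /=; case: (X w).
Qed.

Lemma cellwise_sum_indic {R : realType} (c : bool -> nT -> R) w :
  c (X w) (N w) = \sum_(i : bool * nT) c i.1 i.2 * \1_(cell i.1 i.2) w.
Proof.
rewrite (bigD1 (X w, N w)) //= big1 ?addr0.
  by rewrite indicE mem_set ?mulr1.
move=> [x n] /= hne; rewrite indicE memNset ?mulr0 // => -[hx hn].
by move/eqP: hne; apply; rewrite hx hn.
Qed.

Lemma measurable_cellwise {R : realType} (c : bool -> nT -> R) D :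
  measurable_fun D (fun w => c (X w) (N w)).
Proof.
rewrite (funext (cellwise_sum_indic c)).
apply: measurable_sum => i; apply: measurable_funM; first exact: measurable_cst.
exact/measurable_indic/measurable_cell.
Qed.

Lemma cellset_bigsetU (Q : bool -> nT -> bool) :
  [set w | Q (X w) (N w)] =
  \big[setU/set0]_(i <- enum {: bool * nT})
    (if Q i.1 i.2 then cell i.1 i.2 else set0).
Proof.
rewrite -bigcup_seq; apply/seteqP; split => w /=.
  by move=> hQ; exists (X w, N w); rewrite /= ?mem_enum ?hQ.
by move=> [[x n] _] /=; case: ifP => // hQ [-> ->].
Qed.

Lemma measurable_cellset (Q : bool -> nT -> bool) :
  measurable [set w | Q (X w) (N w)].
Proof.
rewrite cellset_bigsetU; apply: bigsetU_measurable => -[x n] _ /=.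
by case: ifP => _; [exact: measurable_cell | exact: measurable0].
Qed.

Context {R : realType} (mu : {measure set T -> \bar R}).

Lemma integral_cell_cellwise (f : T -> R) (c : bool -> nT -> R) x n :
  mu.-integrable setT (EFin \o f) ->
  (\int[mu]_(w in cell x n) (f w * c (X w) (N w))%:E =
   (c x n)%:E * \int[mu]_(w in cell x n) (f w)%:E)%E.
Proof.
move=> iF; have mc := measurable_cell x n.
rewrite (eq_integral (fun w => (f w)%:E * (c x n)%:E)%E); last first.
  by move=> w; rewrite inE => -[-> ->]; rewrite EFinM.
have icell : mu.-integrable (cell x n) (EFin \o f).
  exact: (integrableS measurableT mc).
by rewrite integralZr // muleC.
Qed.

Lemma integral_cellset_cellwise (f : T -> R) (c : bool -> nT -> R)
    (Q : bool -> nT -> bool) :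
  measurable_fun setT f -> mu.-integrable setT (EFin \o f) ->
  fine (\int[mu]_(w in [set w | Q (X w) (N w)]) (f w * c (X w) (N w))%:E)%E =
  \sum_(i : bool * nT)
    (if Q i.1 i.2 then c i.1 i.2 * fine (\int[mu]_(w in cell i.1 i.2) (f w)%:E)%E
     else 0).
Proof.
move=> mf iF.
pose F (i : bool * nT) := if Q i.1 i.2 then cell i.1 i.2 else set0.
have mF i : measurable (F i).
  by rewrite /F; case: ifP => _; [exact: measurable_cell | exact: measurable0].
rewrite cellset_bigsetU integral_bigsetU_EFin //; last 3 first.
- exact: enum_uniq.
- move=> [x n] [y m] _ _ [w []]; rewrite /F /=.
  by case: ifP => _ //; case: ifP => _ // [<- <-] [<- <-].
- rewrite -cellset_bigsetU; apply/measurable_EFinP.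
  apply: measurable_funM; last exact: measurable_cellwise.
  exact: measurable_funS mf.
rewrite big_enum /= (eq_bigr (fun i => (if Q i.1 i.2 then
  c i.1 i.2 * fine (\int[mu]_(w in cell i.1 i.2) (f w)%:E)%E else 0)%:E)).
  by rewrite sumEFin.
move=> -[x n] _; rewrite /F /=; case: ifP => _; last by rewrite integral_set0.
rewrite integral_cell_cellwise // EFinM fineK //.
apply: integrable_fin_num; first exact: measurable_cell.
exact: (integrableS measurableT (measurable_cell x n)).
Qed.

End Cells.

Section CellMoments.
Context {d : measure_display} {T : measurableType d} {R : realType}
        {P : probability T R} {nT : finType}
        {X : T -> bool} {Y : T -> R} {N : T -> nT}.
Hypothesis mX : measurable [set w | X w].
Hypothesis mN : forall n : nT, measurable [set w | N w = n].
Hypothesis mY : measurable_fun setT Y.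
Hypothesis iY : P.-integrable setT (EFin \o Y).

Definition cell_pr x n := pr P (cell X N x n).
Definition cell_int x n := fine (\int[P]_(w in cell X N x n) (Y w)%:E)%E.

Lemma eq_cellset (S : set T) (Q : bool -> nT -> bool) :
  (forall w, S w <-> Q (X w) (N w)) -> S = [set w | Q (X w) (N w)].
Proof. by move=> h; apply/seteqP; split => w /= /h. Qed.

(* The predicates are left unreduced so that the lemmas on
   [[set w | Q (X w) (N w)]] apply by rewriting. *)
Lemma fiberX_cellset (x0 : bool) :
  [set w | X w = x0] = [set w | (fun x (_ : nT) => x == x0) (X w) (N w)].
Proof. by apply: eq_cellset => w /=; split => [->|/eqP]. Qed.

Lemma fiberN_cellset (n0 : nT) :
  [set w | N w = n0] = [set w | (fun (_ : bool) n => n == n0) (X w) (N w)].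
Proof. by apply: eq_cellset => w /=; split => [->|/eqP]. Qed.

Lemma integral_cellset (g : T -> R) (c : bool -> nT -> R)
    (Q : bool -> nT -> bool) :
  (forall w, g w = c (X w) (N w)) ->
  fine (\int[P]_(w in [set w | Q (X w) (N w)]) (g w)%:E)%E =
  \sum_n ((if Q true n then c true n * cell_pr true n else 0) +
          (if Q false n then c false n * cell_pr false n else 0)).
Proof.
move=> hg.
have cell_one x n : fine (\int[P]_(w in cell X N x n) 1%:E)%E = cell_pr x n.
  have := integral_cst P (measurable_cell _ _ mX mN x n) 1%:E.
  by rewrite mul1e => ->.
under eq_integral do rewrite hg -[c _ _]mul1r.
rewrite (integral_cellset_cellwise _ _ mX mN) //; last first.
  exact: finite_measure_integrable_cst.
by rewrite sum_pair_bool /=; under eq_bigr do rewrite !cell_one.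
Qed.

Lemma integral_Y_cellset (g : T -> R) (c : bool -> nT -> R)
    (Q : bool -> nT -> bool) :
  (forall w, g w = Y w * c (X w) (N w)) ->
  fine (\int[P]_(w in [set w | Q (X w) (N w)]) (g w)%:E)%E =
  \sum_n ((if Q true n then c true n * cell_int true n else 0) +
          (if Q false n then c false n * cell_int false n else 0)).
Proof.
move=> hg; under eq_integral do rewrite hg.
by rewrite (integral_cellset_cellwise _ _ mX mN) // sum_pair_bool.
Qed.

Lemma Ex_cellwise (g : T -> R) (c : bool -> nT -> R) :
  (forall w, g w = c (X w) (N w)) ->
  Ex P g = \sum_n (c true n * cell_pr true n + c false n * cell_pr false n).
Proof.
move=> hg; rewrite /Ex (@eq_cellset setT (fun _ _ => true)) //.
exact: (integral_cellset g c (fun _ _ => true) hg).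
Qed.

Lemma pr_cellset (Q : bool -> nT -> bool) :
  pr P [set w | Q (X w) (N w)] =
  \sum_n ((if Q true n then cell_pr true n else 0) +
          (if Q false n then cell_pr false n else 0)).
Proof.
have := integral_cst P (measurable_cellset _ _ mX mN Q) 1%:E.
rewrite mul1e /pr => <-.
rewrite (integral_cellset (fun _ => 1) (fun _ _ => 1) Q) //.
by under eq_bigr do rewrite !mul1r.
Qed.

Lemma cell_pr_ge0 x n : 0 <= cell_pr x n.
Proof. exact/fine_ge0/measure_ge0. Qed.

Lemma cell_int_null x n : cell_pr x n = 0 -> cell_int x n = 0.
Proof.
have mc := measurable_cell _ _ mX mN x n.
move=> h; rewrite /cell_int null_set_integral //.
  by apply/measurable_EFinP; exact: measurable_funS mY.
move: h; rewrite /cell_pr /pr => h.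
by rewrite -[LHS]fineK ?h ?fin_num_measure.
Qed.

Local Notation a n := (cell_pr true n).
Local Notation b n := (cell_pr false n).
Local Notation u n := (cell_int true n).
Local Notation v n := (cell_int false n).
Local Notation xn n := (a n / (a n + b n)).

Lemma null_fiber_or_mass n :
  (a n = 0 /\ b n = 0 /\ u n = 0 /\ v n = 0) \/ (a n + b n != 0).
Proof.
have [h|] := eqVneq (a n + b n) 0; last by right.
have ha := cell_pr_ge0 true n; have hb := cell_pr_ge0 false n.
have a0 : a n = 0 by lra.
have b0 : b n = 0 by lra.
by left; rewrite a0 b0 !cell_int_null.
Qed.

(* On a null fiber [N = n] all the cell quantities vanish; otherwise its mass
   can be divided by. *)
Local Ltac fiberwise n :=
  let a0 := fresh in let b0 := fresh in let u0 := fresh in let v0 := fresh in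
  have [[a0 [b0 [u0 v0]]]|?] := null_fiber_or_mass n;
    [rewrite ?a0 ?b0 ?u0 ?v0; ring | field].

Lemma Xn_cells n : Xn P X N n = xn n.
Proof.
rewrite /Xn /cE fiberN_cellset.
rewrite (integral_cellset _ (fun x _ => x%:R) (fun _ m => m == n)) //.
rewrite (pr_cellset (fun _ m => m == n)).
by rewrite !big_split /= !sum_if_eq mul1r mul0r addr0.
Qed.

Lemma Yn_cells n : Yn P Y N n = (u n + v n) / (a n + b n).
Proof.
rewrite /Yn /cE fiberN_cellset.
rewrite (integral_Y_cellset _ (fun _ _ => 1) (fun _ m => m == n)) => [|w];
  last by rewrite mulr1.
rewrite (pr_cellset (fun _ m => m == n)).
by rewrite !big_split /= !sum_if_eq !mul1r.
Qed.

Lemma cE_YX_fiberN_cells n :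
  cE P (fun w => Y w * Xr X w) [set w | N w = n] = u n / (a n + b n).
Proof.
rewrite /cE fiberN_cellset.
rewrite (integral_Y_cellset _ (fun x _ => x%:R) (fun _ m => m == n)) //.
rewrite (pr_cellset (fun _ m => m == n)).
by rewrite !big_split /= !sum_if_eq mul1r mul0r addr0.
Qed.

Lemma pr_fiberN n : pr P [set w | N w = n] = a n + b n.
Proof.
by rewrite fiberN_cellset (pr_cellset (fun _ m => m == n)) !big_split /= !sum_if_eq.
Qed.

(* [p1] is P(X = 1), [EXNY1] is E[X_N Y; X = 1] and [EY1] is E[Y; X = 1]. *)
Local Notation p1 := (\sum_n a n).
Local Notation EXN2 := (\sum_n xn n * a n).
Local Notation EXNYN := (\sum_n xn n * (u n + v n)).
Local Notation EXNY1 := (\sum_n xn n * u n).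
Local Notation EY := (\sum_n (u n + v n)).
Local Notation EY1 := (\sum_n u n).

Lemma sum_cell_pr : \sum_n (a n + b n) = 1.
Proof.
have := pr_cellset (fun _ _ => true); rewrite /= => <-.
rewrite (_ : [set w | true] = setT); last by apply/seteqP; split.
by rewrite /pr probability_setT.
Qed.

Lemma sum_cell_pr_false : \sum_n b n = 1 - p1.
Proof. by rewrite -sum_cell_pr big_split /=; ring. Qed.

Lemma sum_cell_int_false : \sum_n v n = EY - EY1.
Proof. by rewrite big_split /=; ring. Qed.

Lemma Ex_XN_cells : Ex P (XN P X N) = p1.
Proof.
rewrite (Ex_cellwise _ (fun _ n => Xn P X N n)) //.
by apply: eq_bigr => n _; rewrite Xn_cells; fiberwise n.
Qed.

Lemma Ex_XN2_cells : Ex P (fun w => XN P X N w * XN P X N w) = EXN2.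
Proof.
rewrite (Ex_cellwise _ (fun _ n => Xn P X N n * Xn P X N n)) //.
by apply: eq_bigr => n _; rewrite Xn_cells; fiberwise n.
Qed.

Lemma Ex_YN_XN_cells : Ex P (fun w => YN P Y N w * XN P X N w) = EXNYN.
Proof.
rewrite (Ex_cellwise _ (fun _ n => Yn P Y N n * Xn P X N n)) //.
by apply: eq_bigr => n _; rewrite Xn_cells Yn_cells; fiberwise n.
Qed.

Lemma Ex_YN_cells : Ex P (YN P Y N) = EY.
Proof.
rewrite (Ex_cellwise _ (fun _ n => Yn P Y N n)) //.
by apply: eq_bigr => n _; rewrite Yn_cells; fiberwise n.
Qed.

Lemma Ex_1subXN_YN_cells :
  Ex P (fun w => (1 - XN P X N w) * YN P Y N w) = EY - EXNYN.
Proof.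
rewrite (Ex_cellwise _ (fun _ n => (1 - Xn P X N n) * Yn P Y N n)) // -sumrB.
by apply: eq_bigr => n _; rewrite Xn_cells Yn_cells; fiberwise n.
Qed.

Lemma Ex_1subXN_cells : Ex P (fun w => 1 - XN P X N w) = 1 - p1.
Proof.
rewrite (Ex_cellwise _ (fun _ n => 1 - Xn P X N n)) // -sum_cell_pr_false.
by apply: eq_bigr => n _; rewrite Xn_cells; fiberwise n.
Qed.

Lemma Dgap_cells : Dgap P X Y = EY1 / p1 - (EY - EY1) / (1 - p1).
Proof.
rewrite /Dgap /cE (@eq_cellset [set w | X w] (fun x _ => x)) //.
rewrite (@eq_cellset [set w | ~~ X w] (fun x _ => ~~ x)) //.
rewrite (integral_Y_cellset _ (fun _ _ => 1) (fun x _ => x)) => [|w];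
  last by rewrite mulr1.
rewrite (integral_Y_cellset _ (fun _ _ => 1) (fun x _ => ~~ x)) => [|w];
  last by rewrite mulr1.
rewrite (pr_cellset (fun x _ => x)) (pr_cellset (fun x _ => ~~ x)) /=.
under eq_bigr do rewrite mul1r addr0.
under [X in _ / X]eq_bigr do rewrite addr0.
under [X in _ - X / _]eq_bigr do rewrite mul1r add0r.
under [X in _ - _ / X]eq_bigr do rewrite add0r.
by rewrite sum_cell_int_false sum_cell_pr_false.
Qed.

Lemma deltaB_cells : deltaB P X Y N = EY1 - EXNYN.
Proof.
rewrite /deltaB.
rewrite (Ex_cellwise _ (fun _ n => cCov P Y (Xr X) [set v | N v = n])) //.
rewrite -sumrB; apply: eq_bigr => n _.
by rewrite /cCov cE_YX_fiberN_cells -/(Yn _ _ _ _) -/(Xn _ _ _ _) Yn_cells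
  Xn_cells; fiberwise n.
Qed.

Lemma cCov_fiberX_true :
  cCov P Y (XN P X N) [set v | X v = true] =
  EXNY1 / p1 - EY1 / p1 * (EXN2 / p1).
Proof.
rewrite /cCov /cE fiberX_cellset.
rewrite (integral_Y_cellset _ (fun _ n => Xn P X N n) (fun x _ => x == true)) //.
rewrite (integral_Y_cellset _ (fun _ _ => 1) (fun x _ => x == true)) => [|w];
  last by rewrite mulr1.
rewrite (integral_cellset _ (fun _ n => Xn P X N n) (fun x _ => x == true)) //.
rewrite (pr_cellset (fun x _ => x == true)) /=.
congr (_ / _ - _ / _ * (_ / _)); apply: eq_bigr => n _;
  by rewrite ?Xn_cells ?mul1r addr0.
Qed.

Lemma cCov_fiberX_false :
  cCov P Y (XN P X N) [set v | X v = false] =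
  (EXNYN - EXNY1) / (1 - p1) - (EY - EY1) / (1 - p1) * ((p1 - EXN2) / (1 - p1)).
Proof.
rewrite /cCov /cE fiberX_cellset.
rewrite (integral_Y_cellset _ (fun _ n => Xn P X N n) (fun x _ => x == false)) //.
rewrite (integral_Y_cellset _ (fun _ _ => 1) (fun x _ => x == false)) => [|w];
  last by rewrite mulr1.
rewrite (integral_cellset _ (fun _ n => Xn P X N n) (fun x _ => x == false)) //.
rewrite (pr_cellset (fun x _ => x == false)) /=.
rewrite -sum_cell_pr_false -!sumrB.
by congr (_ / _ - _ / _ * (_ / _)); apply: eq_bigr => n _;
  rewrite ?Xn_cells; fiberwise n.
Qed.

Lemma deltaW_cells : deltaW P X Y N =
  (EXNY1 / p1 - EY1 / p1 * (EXN2 / p1)) * p1 +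
  ((EXNYN - EXNY1) / (1 - p1) -
   (EY - EY1) / (1 - p1) * ((p1 - EXN2) / (1 - p1))) * (1 - p1).
Proof.
rewrite /deltaW.
rewrite (Ex_cellwise _ (fun x _ => cCov P Y (XN P X N) [set v | X v = x])) //.
by rewrite big_split /= -!mulr_sumr sum_cell_pr_false cCov_fiberX_true
  cCov_fiberX_false.
Qed.

Lemma Ex_XN2_lt_Ex_XN :
  (exists n, 0 < pr P [set w | N w = n] /\ 0 < Xn P X N n < 1) -> EXN2 < p1.
Proof.
case=> n0 [+ /andP[]]; rewrite pr_fiberN Xn_cells => m0 x0 x1.
(* E[X_N (1 - X_N)] = sum_n a_n b_n / (a_n + b_n), whose n0 term is positive. *)
rewrite -subr_gt0 -sumrB.
rewrite (eq_bigr (fun n => a n * b n / (a n + b n)));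
  last by move=> n _; fiberwise n.
rewrite (bigD1 n0) //=; apply: ltr_wpDr.
  by apply: sumr_ge0 => n _; rewrite divr_ge0 ?mulr_ge0 ?addr_ge0 ?cell_pr_ge0.
have hm : a n0 + b n0 != 0 by rewrite gt_eqF.
have ea : a n0 = xn n0 * (a n0 + b n0) by rewrite divfK.
have eb : b n0 = (1 - xn n0) * (a n0 + b n0) by rewrite mulrBl mul1r -ea; ring.
have ha : 0 < a n0 by rewrite ea mulr_gt0.
have hb : 0 < b n0 by rewrite eb mulr_gt0 // subr_gt0.
by rewrite divr_gt0 ?mulr_gt0.
Qed.

Local Notation EXN := (Ex P (XN P X N)).
Local Notation CYX := (Cov P (YN P Y N) (XN P X N)).

Lemma Cov_YN_XN_cells : CYX = EXNYN - EY * p1.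
Proof. by rewrite /Cov Ex_YN_XN_cells Ex_YN_cells Ex_XN_cells mulrC. Qed.

Lemma Var_XN_lt :
  (exists n, 0 < pr P [set w | N w = n] /\ 0 < Xn P X N n < 1) ->
  Var P (XN P X N) < EXN * (1 - EXN).
Proof.
move=> /Ex_XN2_lt_Ex_XN hK.
rewrite /Var /Cov Ex_XN2_cells Ex_XN_cells; lra.
Qed.

Lemma deltaB_decomp : EXN != 0 -> 1 - EXN != 0 ->
  deltaB P X Y N = EXN * (1 - EXN) * Dgap P X Y - CYX.
Proof.
rewrite deltaB_cells Dgap_cells Cov_YN_XN_cells Ex_XN_cells => *.
by field; apply/andP.
Qed.

Lemma deltaW_decomp : EXN != 0 -> 1 - EXN != 0 ->
  deltaW P X Y N = CYX - Dgap P X Y * Var P (XN P X N).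
Proof.
rewrite deltaW_cells Dgap_cells Cov_YN_XN_cells /Var /Cov Ex_XN2_cells.
rewrite Ex_XN_cells => *.
by field; apply/andP.
Qed.

Lemma D_NM_decomp : EXN != 0 -> 1 - EXN != 0 ->
  D_NM P X Y N = CYX / (EXN * (1 - EXN)).
Proof.
rewrite /D_NM Ex_1subXN_YN_cells Ex_1subXN_cells.
rewrite (_ : Ex P (fun w => XN P X N w * YN P Y N w) = EXNYN); last first.
  by rewrite -Ex_YN_XN_cells; congr Ex; apply/funext => w; rewrite mulrC.
rewrite Cov_YN_XN_cells Ex_XN_cells => *.
by field; apply/andP.
Qed.

End CellMoments.

Theorem corollary3 (d : measure_display) (T : measurableType d) (R : realType)
  (P : probability T R) (nT : finType)
  (X : T -> bool) (Y : T -> R) (N : T -> nT) (Ylo Yhi : R)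
  (mX : measurable [set w | X w])
  (mN : forall n : nT, measurable [set w | N w = n])
  (mY : measurable_fun setT Y)
  (iY : P.-integrable setT (EFin \o Y))
  (hn : exists n : nT, 0 < pr P [set w | N w = n] /\
        0 < Xn P X N n < 1)
  (hbd : forall (x : bool) (n : nT),
        0 < pr P [set w | X w = x /\ N w = n] ->
        Ylo <= cE P Y [set w | X w = x /\ N w = n] <= Yhi)
  (hvar : 0 < Var P (XN P X N))
  (hCR : 0 <= deltaW P X Y N * deltaB P X Y N) :
  0 <= Dgap P X Y <-> D_NM P X Y N <= D_ER P X Y N.
Proof.
have hVq := Var_XN_lt mX mN mY hn.
set p := Ex P (XN P X N) in hVq *.
have [p0 p1] : p != 0 /\ 1 - p != 0 by split; apply/eqP; nra.
move: hCR; rewrite (deltaW_decomp mX mN mY iY) ?(deltaB_decomp mX mN mY iY) //.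
rewrite mulrC => hCR.
rewrite /D_ER (D_NM_decomp mX mN mY iY) // ler_div_lt_denom //.
exact: ge0_iff_ge0_of_same_sign hCR.
Qed.
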